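(* Let $X$ be a univariate $L^2$-continuous stochastic process on a compact interval $\mathcal{T}$ with mean $\mu$ and covariance kernel $\kappa$, and let $(\lambda_i,\xi_i)$, $i=1,\dots,m$, be the $m$ largest eigenpairs of the integral operator with kernel $\kappa$, with $\lambda_m>0$. Let $\mathcal{T}=\mathcal{T}_1\cup\dots\cup\mathcal{T}_d$ with pairwise disjoint $\mathcal{T}_a$, $D=\{1,\dots,d\}$. For $R\subseteq D$ let $\hat X^R(t)=X(t)$ if $t\in\bigcup_{b\in R}\mathcal{T}_b$ and $\hat X^R(t)=\mu(t)$ otherwise, and for $a\in D$, $R\subseteq D\setminus\{a\}$, let $\Delta_{\mathcal{T}_a}\mathrm{fmd}^2(\hat X^R,\mu;\kappa,m)=\mathrm{fmd}^2(\hat X^{R\cup\{a\}},\mu;\kappa,m)-\mathrm{fmd}^2(\hat X^R,\mu;\kappa,m)$. Then $$\theta_{\mathcal{T}_a}(X,\mu;\kappa,m):=\sum_{R\subseteq D\setminus\{a\}}\frac{|R|!(d-|R|-1)!}{d!}\Delta_{\mathcal{T}_a}\mathrm{fmd}^2(\hat X^R,\mu;\kappa,m)=\sum_{i=1}^m\frac{1}{\lambda_i}\langle X-\mu,\xi_i\rangle_{\mathcal{T}_a}\langle X-\mu,\xi_i\rangle.$$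
   Context: $\langle f,g\rangle=\int_{\mathcal{T}}f(t)g(t)dt$ and $\langle f,g\rangle_{\mathcal{T}_a}=\int_{\mathcal{T}_a}f(t)g(t)dt$. The squared truncated functional Mahalanobis distance is $\mathrm{fmd}^2(Y,\mu;\kappa,m)=\sum_{i=1}^m\lambda_i^{-1}\langle Y-\mu,\xi_i\rangle^2$. *)

From HB Require Import structures.
From mathcomp Require Import all_boot all_order all_algebra.
From mathcomp Require Import all_classical all_reals all_analysis.
Set Implicit Arguments. Unset Strict Implicit. Unset Printing Implicit Defensive.
Import Order.TTheory GRing.Theory Num.Theory.
Import numFieldNormedType.Exports.
Local Open Scope classical_set_scope.
Local Open Scope ring_scope.

Section Defs.
Context {R : realType}.
Notation leb := (@lebesgue_measure R).

Definition ip (A : set R) (f g : R -> R) : R :=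
  Rintegral leb A (fun t => f t * g t).

Definition L2on (A : set R) (f : R -> R) : Prop :=
  measurable_fun A f /\ leb.-integrable A (fun t => (f t ^+ 2)%:E).

Definition fmd2 (T : set R) (m : nat) (lam : 'I_m -> R) (xi : 'I_m -> R -> R)
  (Y mu : R -> R) : R :=
  \sum_(i < m) (lam i)^-1 * (ip T (fun t => Y t - mu t) (xi i)) ^+ 2.

Definition Xhat (d : nat) (Tp : 'I_d -> set R) (S : {set 'I_d})
  (X mu : R -> R) : R -> R :=
  fun t => if `[< (\bigcup_(b in [set b | b \in S]) Tp b) t >] then X t else mu t.

Definition theta (T : set R) (m : nat) (lam : 'I_m -> R) (xi : 'I_m -> R -> R)
  (d : nat) (Tp : 'I_d -> set R) (a : 'I_d) (X mu : R -> R) : R :=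
  \sum_(S : {set 'I_d} | a \notin S)
     ((factorial #|S| * factorial (d - #|S| - 1))%:R / (factorial d)%:R) *
     (fmd2 T lam xi (Xhat Tp (a |: S) X mu) mu - fmd2 T lam xi (Xhat Tp S X mu) mu).

Context {dO : measure_display} {Omega : measurableType dO} (P : probability Omega R).

Definition mean (X : R -> Omega -> R) (t : R) : R := fine ('E_P[X t])%E.

Definition cov_kernel (X : R -> Omega -> R) (s t : R) : R :=
  fine (covariance P (X s) (X t)).

Definition L2_continuous (T : set R) (X : R -> Omega -> R) : Prop :=
  (forall t, T t -> X t \in Lfun P 2%:E) /\
  (forall t, T t ->
     (fun s => ('E_P[fun w => ((X s w - X t w) ^+ 2)%R])%E) @ within T (nbhs t)
       --> 0%E).

Definition int_op (T : set R) (kappa : R -> R -> R) (f : R -> R) : R -> R :=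
  fun s => Rintegral leb T (fun t => kappa s t * f t).

Definition eigenpair (T : set R) (kappa : R -> R -> R) (lam : R) (f : R -> R) : Prop :=
  L2on T f /\ ip T f f != 0 /\ forall s, T s -> int_op T kappa f s = lam * f s.

Definition largest_eigenpairs (T : set R) (kappa : R -> R -> R) (m : nat)
  (lam : 'I_m -> R) (xi : 'I_m -> R -> R) : Prop :=
  (forall i, eigenpair T kappa (lam i) (xi i)) /\
  (forall i j, ip T (xi i) (xi j) = (i == j)%:R) /\
  (forall i j : 'I_m, (i <= j)%N -> lam j <= lam i) /\
  (forall (l : R) (f : R -> R), eigenpair T kappa l f ->
     (forall i, ip T f (xi i) = 0) -> forall i, lam i >= l).

End Defs.

From HB Require Import structures.
From mathcomp Require Import all_boot all_order all_algebra.
From mathcomp Require Import all_classical all_reals all_analysis.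
From mathcomp Require Import measurable_realfun ring lra.
Import Order.TTheory GRing.Theory Num.Theory.
Import numFieldNormedType.Exports.
Set Implicit Arguments. Unset Strict Implicit. Unset Printing Implicit Defensive.
Local Open Scope classical_set_scope.
Local Open Scope ring_scope.

(* Write c_(i,b) := <X - mu, xi_i>_(T_b).  Masking X by mu outside the blocks of R
   kills their contribution, so <hat X^R - mu, xi_i> = sum_(b in R) c_(i,b) and theta is
   the Shapley value of the game R |-> sum_i lam_i^-1 (sum_(b in R) c_(i,b))^2.  By
   linearity it suffices to treat one square (sum_(b in R) c_b)^2: the marginal
   contribution of a is c_a^2 + 2 c_a sum_(b in R) c_b, the Shapley weights sum to 1, and
   each player b <> a lies in R with total weight 1/2, giving c_a * sum_b c_b.  The
   analytic input is that mu is continuous (by L^2-continuity), hence square integrable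
   on the compact interval, so that all the inner products split over the blocks. *)

Section ShapleyValue.
Local Close Scope classical_set_scope.
Variable R : numFieldType.

Definition shapley_weight (d k : nat) : R := (k`! * (d - k - 1)`!)%:R / d`!%:R.

Definition shapley_value d (v : {set 'I_d} -> R) (a : 'I_d) : R :=
  \sum_(S : {set 'I_d} | a \notin S) shapley_weight d #|S| * (v (a |: S) - v S).

Lemma shapley_value_sum d (I : Type) (r : seq I) (Q : pred I)
    (v : I -> {set 'I_d} -> R) a :
  shapley_value (fun S => \sum_(i <- r | Q i) v i S) a =
  \sum_(i <- r | Q i) shapley_value (v i) a.
Proof.
rewrite exchange_big /=; apply: eq_bigr => S _.
by rewrite -sumrB mulr_sumr.
Qed.

Lemma shapley_valueZ d (k : R) (v : {set 'I_d} -> R) a :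
  shapley_value (fun S => k * v S) a = k * shapley_value v a.
Proof.
rewrite /shapley_value mulr_sumr; apply: eq_bigr => S _.
by rewrite -mulrBr mulrCA.
Qed.

Lemma subset_setC1 (T : finType) (S : {set T}) a : (S \subset [set~ a]) = (a \notin S).
Proof. by rewrite finset.subsetC finset.sub1set inE. Qed.

Lemma card_setC1_le n (a : 'I_n.+1) (S : {set 'I_n.+1}) : a \notin S -> (#|S| <= n)%N.
Proof.
by rewrite -subset_setC1 => /subset_leq_card; rewrite cardsC1 card_ord.
Qed.

Lemma sum_setC1_card n (a : 'I_n.+1) (f : nat -> R) :
  \sum_(S : {set 'I_n.+1} | a \notin S) f #|S| = \sum_(k < n.+1) 'C(n, k)%:R * f k.
Proof.
rewrite (partition_big (fun S : {set 'I_n.+1} => inord #|S| : 'I_n.+1) xpredT) //=.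
apply: eq_bigr => k _.
rewrite (eq_bigl (fun S => S \in [set S : {set 'I_n.+1} | S \subset [set~ a] & #|S| == k])).
  rewrite (eq_bigr (fun _ => f k)) => [|S]; last by rewrite finset.in_set => /andP[_ /eqP ->].
  by rewrite sumr_const cards_draws cardsC1 card_ord mulr_natl.
move=> S; rewrite !inE subset_setC1; have [aS /=|//] := boolP (a \notin S).
by rewrite -val_eqE /= inordK // ltnS (card_setC1_le aS).
Qed.

Lemma shapley_weight_sum n (a : 'I_n.+1) :
  \sum_(S : {set 'I_n.+1} | a \notin S) shapley_weight n.+1 #|S| = 1.
Proof.
rewrite sum_setC1_card (eq_bigr (fun _ => n`!%:R / n.+1`!%:R)) => [|k _].
  rewrite sumr_const card_ord -[_ *+ n.+1]mulr_natl mulrA -natrM -factS.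
  by rewrite divff // pnatr_eq0 -lt0n fact_gt0.
by rewrite /shapley_weight mulrA -natrM subn1 subSKn bin_fact // -ltnS.
Qed.

Lemma shapley_weight_sym n k : (k <= n)%N ->
  shapley_weight n.+1 (n - k) = shapley_weight n.+1 k.
Proof. by move=> kn; rewrite /shapley_weight !subn1 !subSKn subKn // mulnC. Qed.

(* Complementing inside [set~ a] swaps [b \in S] and [b \notin S] and preserves weights. *)
Lemma shapley_weight_sum_mem n (a b : 'I_n.+1) : b != a ->
  \sum_(S : {set 'I_n.+1} | (a \notin S) && (b \in S)) shapley_weight n.+1 #|S| = 2^-1.
Proof.
move=> ba; pose flip (S : {set 'I_n.+1}) := [set x | (x \in S) (+) (x != a)].
have flipK : involutive flip by move=> S; apply/setP => x; rewrite !finset.inE addbK.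
have flip_sum :
    \sum_(S : {set 'I_n.+1} | (a \notin S) && (b \in S)) shapley_weight n.+1 #|S| =
    \sum_(S : {set 'I_n.+1} | (a \notin S) && (b \notin S)) shapley_weight n.+1 #|S|.
  rewrite (reindex_inj (can_inj flipK)) /=; apply: eq_big => S.
    by rewrite !finset.inE eqxx ba addbF addbT.
  case/andP=> + _; rewrite finset.inE eqxx addbF => aS.
  have -> : flip S = [set~ a] :\: S.
    apply/setP => x; rewrite !finset.inE; case: eqVneq => [->|_] /=.
      by rewrite addbF (negbTE aS).
    by rewrite addbT andbT.
  rewrite cardsD (finset.setIidPr _) ?subset_setC1 // cardsC1 card_ord.
  exact: shapley_weight_sym (card_setC1_le aS).
have := shapley_weight_sum a.
rewrite (bigID (fun S : {set 'I_n.+1} => b \in S)) /= -flip_sum => sum2.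
apply: (@mulfI _ 2); first by rewrite pnatr_eq0.
by rewrite divff ?pnatr_eq0 // mulr_natl mulr2n.
Qed.

Lemma sum_shapley_weight_mem_sum n (a : 'I_n.+1) (c : 'I_n.+1 -> R) :
  \sum_(S : {set 'I_n.+1} | a \notin S) shapley_weight n.+1 #|S| * \sum_(b in S) c b =
  2^-1 * \sum_(b | b != a) c b.
Proof.
under eq_bigr do rewrite mulr_sumr.
rewrite (exchange_big_dep xpredT) //= (bigD1 a) //= big_pred0 => [|S]; last by rewrite andNb.
rewrite add0r mulr_sumr; apply: eq_bigr => b ba.
by rewrite -mulr_suml shapley_weight_sum_mem.
Qed.

Lemma shapley_value_sqr_sum n (a : 'I_n.+1) (c : 'I_n.+1 -> R) :
  shapley_value (fun S => (\sum_(b in S) c b) ^+ 2) a = c a * \sum_b c b.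
Proof.
rewrite /shapley_value (eq_bigr (fun S : {set _} => c a ^+ 2 * shapley_weight n.+1 #|S| +
    2 * c a * (shapley_weight n.+1 #|S| * \sum_(b in S) c b))) => [|S aS]; last first.
  by rewrite big_setU1 //=; ring.
rewrite big_split /= -!mulr_sumr shapley_weight_sum sum_shapley_weight_mem_sum.
by rewrite [in RHS](bigD1 a) //=; field.
Qed.

End ShapleyValue.

Section FiniteDisjointUnion.
Context d (T : measurableType d) (R : realType) (mu : {measure set T -> \bar R}).

Lemma Rintegral_bigcup_finset (I : finType) (F : I -> set T) (D : set T) (f : T -> R) :
  measurable D -> (forall i, measurable (F i)) -> (forall i, F i `<=` D) ->
  (forall i j, i != j -> F i `&` F j = set0) -> mu.-integrable D (EFin \o f) ->
  forall S : {set I},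
  \int[mu]_(x in \bigcup_(i in [set i | i \in S]) F i) f x =
  \sum_(i in S) \int[mu]_(x in F i) f x.
Proof.
move=> mD mF sFD dF intf S.
have -> : \bigcup_(i in [set i | i \in S]) F i = \big[setU/set0]_(i <- enum S) F i.
  by rewrite -bigcup_seq; apply: eq_bigcupl; split => i /=; rewrite mem_enum.
rewrite /Rintegral integral_bigsetU_EFin //=.
- rewrite -sum_fine ?big_enum // => i _.
  exact: integrable_fin_num (integrableS mD (mF i) (sFD i) intf).
- exact: enum_uniq.
- by apply/trivIsetP => i j _ _; exact: dF.
- apply: measurable_funS mD _ (measurable_int mu intf).
  by rewrite -bigcup_seq => x [i _ /sFD].
Qed.

End FiniteDisjointUnion.

Section SquareIntegrable.
Context (R : realType).
Notation leb := (@lebesgue_measure R).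

Lemma L2on_integrable_mul (A : set R) (f g : R -> R) :
  measurable (A : set (measurableTypeR R)) ->
  L2on A f -> L2on A g -> leb.-integrable A (EFin \o (fun t => f t * g t)).
Proof.
move=> mA [mf f2] [mg g2].
apply: (le_integrable mA _ _ (integrableD mA f2 g2)).
  exact/measurable_EFinP/measurable_funM.
move=> t _; rewrite /= lee_fin.
rewrite [X in _ <= X]ger0_norm ?addr_ge0 ?sqr_ge0 // ler_norml.
by apply/andP; split; nra.
Qed.

Lemma L2onB (A : set R) (f g : R -> R) : measurable (A : set (measurableTypeR R)) ->
  L2on A f -> L2on A g -> L2on A (fun t => f t - g t).
Proof.
move=> mA [mf f2] [mg g2]; have mfg := measurable_funB mf mg; split => //.
apply: (le_integrable mA _ _ (integrableZl mA 2 (integrableD mA f2 g2))).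
  exact/measurable_EFinP/measurable_funX.
move=> t _; rewrite /= lee_fin.
rewrite ger0_norm ?sqr_ge0 // ger0_norm ?mulr_ge0 ?addr_ge0 ?sqr_ge0 //.
have := sqr_ge0 (f t + g t); nra.
Qed.

Lemma continuous_L2on (A : set R) (f : R -> R) : compact A ->
  {within A, continuous f} -> L2on A f.
Proof.
move=> cA cf; split.
  exact: subspace_continuous_measurable_fun (compact_measurable cA) cf.
apply: continuous_compact_integrable cA _.
by move=> x; exact: (continuousM (cf x) (cf x)).
Qed.

End SquareIntegrable.

Lemma ip_Xhat (R : realType) d (Tp : 'I_d -> set R) (T : set R) (Y mu f : R -> R) :
  measurable (T : set (measurableTypeR R)) -> (forall b, measurable (Tp b)) ->
  (forall b, Tp b `<=` T) -> (forall b c, b != c -> Tp b `&` Tp c = set0) ->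
  (@lebesgue_measure R).-integrable T (EFin \o (fun t => (Y t - mu t) * f t)) ->
  forall S : {set 'I_d},
  ip T (fun t => Xhat Tp S Y mu t - mu t) f =
  \sum_(b in S) ip (Tp b) (fun t => Y t - mu t) f.
Proof.
move=> mT mTp sT dTp intT S.
have sUT : \bigcup_(b in [set b | b \in S]) Tp b `<=` T by move=> t [b _ /sT].
rewrite /ip -(Rintegral_bigcup_finset mT) // -(setIidr sUT) Rintegral_mkcondr.
apply: eq_Rintegral => t _; rewrite /Xhat /patch; case: ifPn => [/set_mem Ut|].
  by rewrite mem_set.
move=> /asboolPn nUt; rewrite subrr mul0r ifF //.
by apply/negbTE; rewrite notin_setE.
Qed.

Lemma ip_partition (R : realType) d (Tp : 'I_d -> set R) (T : set R) (Y mu f : R -> R) :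
  measurable (T : set (measurableTypeR R)) -> (forall b, measurable (Tp b)) ->
  T = \bigcup_(b in setT) Tp b -> (forall b c, b != c -> Tp b `&` Tp c = set0) ->
  (@lebesgue_measure R).-integrable T (EFin \o (fun t => (Y t - mu t) * f t)) ->
  ip T (fun t => Y t - mu t) f = \sum_b ip (Tp b) (fun t => Y t - mu t) f.
Proof.
move=> mT mTp Tcov dTp intT; have sT b : Tp b `<=` T by rewrite Tcov => t Tbt; exists b.
rewrite (eq_bigl (fun b => b \in [set: 'I_d]%SET)) => [|b]; last by rewrite finset.in_setT.
rewrite -(ip_Xhat mT mTp sT dTp intT); apply: eq_Rintegral => t; rewrite inE => Tt.
rewrite /Xhat asboolT //; move: Tt; rewrite Tcov => -[b _ Tbt].
by exists b => //=; rewrite finset.in_setT.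
Qed.

Section MeanFunction.
Context (R : realType) (dO : measure_display) (Omega : measurableType dO).
Variable P : probability Omega R.

Lemma sqr_expectation_le (Y : Omega -> R) : Y \in Lfun P 2%:E ->
  fine 'E_P[Y]%E ^+ 2 <= fine 'E_P[Y ^+ 2]%E.
Proof.
move=> Y2; have Pfin : P setT \is a fin_num := fin_num_measure P _ measurableT.
have fY := expectation_fin_num (Lfun_subset12 Pfin Y2).
have fY2 : 'E_P[Y ^+ 2]%E \is a fin_num := expectation_fin_num (Lfun2_mul_Lfun1 Y2 Y2).
have := variance_ge0 P Y; rewrite varianceE // -(fineK fY) -(fineK fY2).
by rewrite -EFin_expe -EFinB lee_fin subr_ge0.
Qed.

Lemma mean_sub_sqr_le (X : R -> Omega -> R) s t :
  X s \in Lfun P 2%:E -> X t \in Lfun P 2%:E ->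
  (mean P X s - mean P X t) ^+ 2 <= fine 'E_P[fun w => ((X s w - X t w) ^+ 2)%R]%E.
Proof.
move=> Xs Xt; have Pfin : P setT \is a fin_num := fin_num_measure P _ measurableT.
have Xst : X s \- X t \in Lfun P 2%:E.
  by apply: (Lfun_addr_closed P _).2 Xs (Lfun_oppr_closed Xt); rewrite lee_fin ler1n.
have [Xs1 Xt1] := (Lfun_subset12 Pfin Xs, Lfun_subset12 Pfin Xt).
rewrite /mean -fineB ?expectation_fin_num // -expectationB //.
exact: sqr_expectation_le Xst.
Qed.

Lemma mean_continuous (T : set R) (X : R -> Omega -> R) :
  L2_continuous P T X -> {within T, continuous (mean P X)}.
Proof.
move=> [L2X cvgX]; rewrite continuous_subspace_in => t; rewrite inE => Tt.
rewrite /continuous_at.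
have -> : nbhs (t : subspace T) = within T (nbhs t) by rewrite nbhs_subspace_in.
have wF := within_filter T (nbhs_filter t).
have /fine_cvgP[_ cvg_fine] := cvgX t Tt.
apply/(subr_cvg0 (FF := wF))/(norm_cvg0P (FF := wF)).
apply: (@squeeze_cvgr _ _ wF _ (cst 0) (fun s => Num.sqrt (fine
    'E_P[fun w => ((X s w - X t w) ^+ 2)%R]%E))); last 2 first.
- exact: cvg_cst.
- by have := continuous_cvg wF (@sqrt_continuous R 0) cvg_fine; rewrite sqrtr0.
near=> s; have Ts : T s by near: s; exact: near_withinT.
rewrite normr_ge0 -sqrtr_sqr ler_sqrt ?mean_sub_sqr_le ?L2X //.
by rewrite fine_ge0 // expectation_ge0 // => w; exact: sqr_ge0.
Unshelve. all: by end_near.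
Qed.

End MeanFunction.

Theorem proposition1 (R : realType) (dO : measure_display) (Omega : measurableType dO)
  (P : probability Omega R) (ta tb : R) (X : R -> Omega -> R)
  (m : nat) (lam : 'I_m.+1 -> R) (xi : 'I_m.+1 -> R -> R)
  (d : nat) (Tp : 'I_d -> set R) (a : 'I_d) (w : Omega) :
  ta < tb ->
  (forall t, measurable_fun setT (X t)) ->
  L2_continuous P [set` `[ta, tb]] X ->
  largest_eigenpairs [set` `[ta, tb]] (cov_kernel P X) lam xi ->
  0 < lam ord_max ->
  (forall b, measurable (Tp b)) ->
  [set` `[ta, tb]] = \bigcup_(b in setT) Tp b ->
  (forall b c, b != c -> Tp b `&` Tp c = set0) ->
  L2on [set` `[ta, tb]] (fun t => X t w) ->
  theta [set` `[ta, tb]] lam xi Tp a (fun t => X t w) (mean P X) =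
  \sum_(i < m.+1) (lam i)^-1 *
     ip (Tp a) (fun t => X t w - mean P X t) (xi i) *
     ip [set` `[ta, tb]] (fun t => X t w - mean P X t) (xi i).
Proof.
case: d Tp a => [|n] Tp a; first by case: a.
(* The identity is algebraic in lam: of the eigen-structure only xi_i \in L^2 is used. *)
move=> _ _ L2X [eig _] _ mTp Tcov dTp L2w.
set T := [set` `[ta, tb]]; set mu := mean P X; set Y := fun t => X t w.
have mT : measurable (T : set (measurableTypeR R)) by exact: measurable_itv.
have sT b : Tp b `<=` T by move=> t Tbt; rewrite /T Tcov; exists b.
have L2mu : L2on T mu.
  by apply: continuous_L2on (mean_continuous L2X); exact: segment_compact.
have intT i := L2on_integrable_mul mT (L2onB mT L2w L2mu) (eig i).1.
pose c i b := ip (Tp b) (fun t => Y t - mu t) (xi i).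
have -> : theta T lam xi Tp a Y mu = shapley_value (fun S =>
    \sum_(i < m.+1) (lam i)^-1 * (\sum_(b in S) c i b) ^+ 2) a.
  congr shapley_value; apply/funext => S; apply: eq_bigr => i _.
  by rewrite (ip_Xhat mT mTp sT dTp (intT i)).
rewrite shapley_value_sum; apply: eq_bigr => i _.
rewrite shapley_valueZ shapley_value_sqr_sum mulrA.
by rewrite (ip_partition mT mTp Tcov dTp (intT i)).
Qed.
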